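(* Let $G$ be a group, $N$ a normal subgroup of $G$, and $S=\bigoplus_{g\in G}S_g$ a virtually epsilon-strongly $G$-graded ring where, for each $g\in G$, $M_g$ is a set of commuting orthogonal idempotents such that $E_g=\bigvee M_g$ is a set of local units for $S_gS_{g^{-1}}$. For each $C\in G/N$ put $A_C=\bigvee_{g\in C}M_g$ and assume: (a) for all $g,h\in C$ and $e\in M_g$, $f\in M_h$ we have $ef=fe$; (b) the maximal elements of $(A_C,\le)$ are pairwise orthogonal idempotents; (c) every chain in the poset $(A_C,\le)$ is finite. Then the induced $G/N$-grading $\{S_C\}_{C\in G/N}$ is virtually epsilon-strong.
   Context: Rings are associative, not necessarily unital; $AB$ denotes finite sums of products. A $G$-grading: $S=\bigoplus_gS_g$, $S_gS_h\subseteq S_{gh}$. Induced grading: $S_C=\bigoplus_{g\in C}S_g$. Idempotents are ordered by $a\le b$ iff $a=ab=ba$; $\vee$ is the least upper bound (for commuting idempotents $a\vee b=a+b-ab$); for a family $\{M_i\}$, $\bigvee_iM_i$ is the set of finite joins of elements of $\bigcup_iM_i$. A set of local units for a ring $R$ is a $\vee$-closed set of pairwise commuting idempotents of $R$ such that every $r\in R$ has some $f$ in it with $fr=rf=r$. A grading $\{T_h\}_{h\in H}$ is virtually epsilon-strong if $T_hT_{h^{-1}}T_h=T_h$ for all $h$ and each ring $T_hT_{h^{-1}}$ has enough idempotents: a set of pairwise orthogonal commuting idempotents of that ring whose $\vee$-closure is a set of local units for it. *)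

From HB Require Import structures.
From mathcomp Require Import all_boot all_algebra.
From Stdlib Require List.
Set Implicit Arguments. Unset Strict Implicit. Unset Printing Implicit Defensive.
Import GRing.Theory.
Local Open Scope ring_scope.

Record Grp := {
  gcar :> Type;
  gmul : gcar -> gcar -> gcar;
  ginv : gcar -> gcar;
  gone : gcar;
  gmulA : forall x y z, gmul x (gmul y z) = gmul (gmul x y) z;
  gmul1 : forall x, gmul gone x = x /\ gmul x gone = x;
  gmulV : forall x, gmul (ginv x) x = gone /\ gmul x (ginv x) = gone
}.

Definition normal_subgroup (G : Grp) (N : G -> Prop) : Prop :=
  N (gone G) /\
  (forall x y, N x -> N y -> N (gmul x y)) /\
  (forall x, N x -> N (ginv x)) /\
  (forall g x, N x -> N (gmul (gmul (ginv g) x) g)).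

Definition coset (G : Grp) (N : G -> Prop) (g : G) : G -> Prop :=
  fun h => N (gmul (ginv g) h).

(** * Associative, not necessarily unital rings: an additive group S with a
      biadditive associative multiplication *)
Definition is_rng (S : zmodType) (mul : S -> S -> S) : Prop :=
  (forall x y z, mul x (mul y z) = mul (mul x y) z) /\
  (forall x y z, mul (x + y) z = mul x z + mul y z) /\
  (forall x y z, mul x (y + z) = mul x y + mul x z).

Section RingNotions.
Variables (S : zmodType) (mul : S -> S -> S).

Definition seteq (A B : S -> Prop) : Prop := forall x, A x <-> B x.

Definition prodset (A B : S -> Prop) : S -> Prop :=
  fun x => exists l : seq (S * S),
    (forall p, List.In p l -> A p.1 /\ B p.2) /\
    x = \sum_(p <- l) mul p.1 p.2.

Definition idem (e : S) : Prop := mul e e = e.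

Definition idle (a b : S) : Prop := a = mul a b /\ a = mul b a.

(** join of two commuting idempotents (their least upper bound) *)
Definition ijoin (a b : S) : S := a + b - mul a b.

Definition vee (M : S -> Prop) : S -> Prop :=
  fun x => exists (e : S) (s : seq S),
    M e /\ (forall y, List.In y s -> M y) /\ x = foldr ijoin e s.

Definition local_units (R E : S -> Prop) : Prop :=
  (forall e, E e -> R e /\ idem e) /\
  (forall e f, E e -> E f -> mul e f = mul f e) /\
  (forall e f, E e -> E f -> E (ijoin e f)) /\
  (forall r, R r -> exists f, E f /\ mul f r = r /\ mul r f = r).

Definition enough_idem_set (R M : S -> Prop) : Prop :=
  (forall e, M e -> R e /\ idem e) /\
  (forall e f, M e -> M f -> mul e f = mul f e) /\
  (forall e f, M e -> M f -> e <> f -> mul e f = 0 /\ mul f e = 0) /\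
  local_units R (vee M).

Definition has_enough_idem (R : S -> Prop) : Prop :=
  exists M, enough_idem_set R M.

Definition veps_component (Th Thinv : S -> Prop) : Prop :=
  seteq (prodset (prodset Th Thinv) Th) Th /\ has_enough_idem (prodset Th Thinv).

End RingNotions.

Definition is_grading (G : Grp) (S : zmodType) (mul : S -> S -> S)
    (Sg : G -> S -> Prop) : Prop :=
  (forall g, Sg g 0) /\
  (forall g x y, Sg g x -> Sg g y -> Sg g (x - y)) /\
  (forall g h x y, Sg g x -> Sg h y -> Sg (gmul g h) (mul x y)) /\
  (forall s, exists l : seq (G * S),
      (forall p, List.In p l -> Sg p.1 p.2) /\ s = \sum_(p <- l) p.2) /\
  (forall l : seq (G * S), List.NoDup (map fst l) ->
      (forall p, List.In p l -> Sg p.1 p.2) -> \sum_(p <- l) p.2 = 0 ->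
      forall p, List.In p l -> p.2 = 0).

Definition induced_comp (G : Grp) (N : G -> Prop) (S : zmodType)
    (Sg : G -> S -> Prop) (g : G) : S -> Prop :=
  fun x => exists l : seq (G * S),
    (forall p, List.In p l -> coset N g p.1 /\ Sg p.1 p.2) /\
    x = \sum_(p <- l) p.2.

Definition A_C (G : Grp) (N : G -> Prop) (S : zmodType) (mul : S -> S -> S)
    (M : G -> S -> Prop) (g : G) : S -> Prop :=
  vee mul (fun e => exists h, coset N g h /\ M h e).

Definition maximal_in (S : zmodType) (mul : S -> S -> S) (A : S -> Prop) (e : S) :=
  A e /\ forall f, A f -> idle mul e f -> f = e.

Definition is_chain (S : zmodType) (mul : S -> S -> S) (A Ch : S -> Prop) :=
  (forall x, Ch x -> A x) /\
  (forall x y, Ch x -> Ch y -> idle mul x y \/ idle mul y x).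

Definition finite_set (S : Type) (X : S -> Prop) :=
  exists l : seq S, forall x, X x -> List.In x l.

From mathcomp Require Import all_boot all_algebra.
From Stdlib Require Import Classical ClassicalEpsilon.
From Stdlib Require List.
Set Implicit Arguments. Unset Strict Implicit. Unset Printing Implicit Defensive.
Import GRing.Theory.
Local Open Scope ring_scope.

(** For C = gN, the identity S_C S_{C^-1} S_C = S_C holds componentwise, since
    S_h S_{h^-1} S_h = S_h and C C^-1 C = C.  Put R_C = S_C S_{C^-1}.  Every
    x in S_h has a left unit in \/M_h and every y in S_k a right unit in
    \/M_{k^-1}; for h, k^-1 in C all of these lie in A_C, which by (a) is a
    commuting, \/-closed set of idempotents of R_C.  Joining such one-sided
    units shows that A_C is a set of local units for R_C.  By (c) every
    element of A_C lies below a maximal one (otherwise a choice of strictly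
    larger elements yields an infinite chain), so the maximal elements of A_C,
    pairwise orthogonal by (b), still act as local units after taking joins:
    they form the required set of enough idempotents of R_C. *)

Lemma sum_In_ind (S : zmodType) (P : S -> Prop) (T : Type) (l : seq T) (F : T -> S) :
  P 0 -> (forall x y, P x -> P y -> P (x + y)) ->
  (forall p, List.In p l -> P (F p)) -> P (\sum_(p <- l) F p).
Proof.
move=> P0 PD; elim: l => [|a l IHl] Hl; first by rewrite big_nil.
rewrite big_cons; apply: PD; first by apply: Hl; left.
by apply: IHl => p Hp; apply: Hl; right.
Qed.

Lemma In_mem (T : eqType) (x : T) (l : seq T) : List.In x l -> x \in l.
Proof.
by elim: l => //= y l IHl [-> | /IHl]; rewrite in_cons ?eqxx // => ->; rewrite orbT.
Qed.

Lemma infinite_range_inj (T : eqType) (s : nat -> T) :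
  injective s -> ~ finite_set (fun x => exists n, x = s n).
Proof.
move=> s_inj [l Hl].
have sub : {subset [seq s i | i <- iota 0 (size l).+1] <= l}.
  by move=> _ /mapP [i _ ->]; apply: In_mem; apply: Hl; exists i.
have uniq_s : uniq [seq s i | i <- iota 0 (size l).+1].
  by rewrite map_inj_uniq // iota_uniq.
have := uniq_leq_size uniq_s sub.
by rewrite size_map size_iota ltnn.
Qed.

Section Rng.
Variables (S : zmodType) (mul : S -> S -> S).
Hypothesis mul_rng : is_rng mul.

Lemma rmulA x y z : mul x (mul y z) = mul (mul x y) z.
Proof. by case: mul_rng. Qed.
Lemma rmulDl x y z : mul (x + y) z = mul x z + mul y z.
Proof. by case: mul_rng => _ []. Qed.
Lemma rmulDr x y z : mul x (y + z) = mul x y + mul x z.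
Proof. by case: mul_rng => _ []. Qed.
Lemma rmul0l x : mul 0 x = 0.
Proof. by apply: (addrI (mul 0 x)); rewrite -rmulDl !addr0. Qed.
Lemma rmul0r x : mul x 0 = 0.
Proof. by apply: (addrI (mul x 0)); rewrite -rmulDr !addr0. Qed.
Lemma rmulNl x y : mul (- x) y = - mul x y.
Proof. by apply: (addrI (mul x y)); rewrite -rmulDl !subrr rmul0l. Qed.
Lemma rmulNr x y : mul x (- y) = - mul x y.
Proof. by apply: (addrI (mul x y)); rewrite -rmulDr !subrr rmul0r. Qed.
Lemma rmulBl x y z : mul (x - y) z = mul x z - mul y z.
Proof. by rewrite rmulDl rmulNl. Qed.
Lemma rmulBr x y z : mul x (y - z) = mul x y - mul x z.
Proof. by rewrite rmulDr rmulNr. Qed.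

Lemma rmul_suml (T : Type) (l : seq T) (F : T -> S) w :
  mul (\sum_(p <- l) F p) w = \sum_(p <- l) mul (F p) w.
Proof. by elim: l => [|a l IHl]; rewrite ?big_nil ?rmul0l // !big_cons rmulDl IHl. Qed.
Lemma rmul_sumr (T : Type) (l : seq T) (F : T -> S) w :
  mul w (\sum_(p <- l) F p) = \sum_(p <- l) mul w (F p).
Proof. by elim: l => [|a l IHl]; rewrite ?big_nil ?rmul0r // !big_cons rmulDr IHl. Qed.

Lemma prodset0 A B : prodset mul A B 0.
Proof. by exists [::]; rewrite big_nil. Qed.

Lemma prodsetD A B x y :
  prodset mul A B x -> prodset mul A B y -> prodset mul A B (x + y).
Proof.
move=> [l1 [H1 ->]] [l2 [H2 ->]]; exists (l1 ++ l2); split; last by rewrite big_cat.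
by move=> p /(@List.in_app_or _ _ _ _) [] ?; [exact: H1 | exact: H2].
Qed.

Lemma prodset_sum (A B : S -> Prop) (T : Type) (l : seq T) (F : T -> S) :
  (forall p, List.In p l -> prodset mul A B (F p)) ->
  prodset mul A B (\sum_(p <- l) F p).
Proof. exact: sum_In_ind (prodset0 A B) (@prodsetD A B). Qed.

Lemma prodsetN (A B : S -> Prop) x :
  (forall a, A a -> A (- a)) -> prodset mul A B x -> prodset mul A B (- x).
Proof.
move=> AN [l [Hl ->]]; exists [seq (- p.1, p.2) | p <- l]; split.
  move=> _ /(List.in_map_iff _ _ _) [q [<- /Hl [Aq Bq]]]; split=> //; exact: AN.
by rewrite big_map -sumrN; apply: eq_bigr => p _; rewrite rmulNl.
Qed.

Lemma prodset_mul (A B : S -> Prop) a b : A a -> B b -> prodset mul A B (mul a b).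
Proof.
move=> Aa Bb; exists [:: (a, b)]; split; last by rewrite big_seq1.
by move=> p [<- | []].
Qed.

Lemma prodsetS (A B A' B' : S -> Prop) x :
  (forall a, A a -> A' a) -> (forall b, B b -> B' b) ->
  prodset mul A B x -> prodset mul A' B' x.
Proof. by move=> AA' BB' [l [Hl ->]]; exists l; split=> // p /Hl [/AA' ? /BB' ?]. Qed.

Lemma prodset_sumA (A B C : S -> Prop) x :
  prodset mul (prodset mul A B) C x -> prodset mul A (prodset mul B C) x.
Proof.
move=> [l [Hl ->]]; apply: prodset_sum => p /Hl [[l' [Hl' ->]] Cp].
rewrite rmul_suml; apply: prodset_sum => q /Hl' [Aq Bq].
by rewrite -rmulA; apply: prodset_mul => //; apply: prodset_mul.
Qed.

Lemma ijoinA a b c : ijoin mul (ijoin mul a b) c = ijoin mul a (ijoin mul b c).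
Proof.
rewrite /ijoin rmulBl rmulDl rmulBr rmulDr rmulA !opprD !opprK !addrA.
congr (_ + _); rewrite (addrAC _ (- mul a c)); congr (_ + _).
by rewrite (addrAC _ (- mul a b) c) (addrAC _ (- mul a b)).
Qed.

Lemma commute_ijoin a b c : mul c a = mul a c -> mul c b = mul b c ->
  mul c (ijoin mul a b) = mul (ijoin mul a b) c.
Proof.
move=> ca cb; have cab : mul c (mul a b) = mul (mul a b) c.
  by rewrite rmulA ca -rmulA cb rmulA.
by rewrite /ijoin rmulBr rmulDr rmulBl rmulDl ca cb cab.
Qed.

Lemma idem_ijoin a b : idem mul a -> idem mul b -> mul a b = mul b a ->
  idem mul (ijoin mul a b).
Proof.
rewrite /idem => aa bb ab; set x := ijoin mul a b.
have aba : mul (mul a b) a = mul a b by rewrite -rmulA -ab rmulA aa.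
have abb : mul (mul a b) b = mul a b by rewrite -rmulA bb.
have xa : mul x a = a by rewrite /x /ijoin rmulBl rmulDl aa -ab aba addrK.
have xb : mul x b = b by rewrite /x /ijoin rmulBl rmulDl bb abb addrAC subrr add0r.
by rewrite {2}/x /ijoin rmulBr rmulDr xa xb rmulA xa.
Qed.

Lemma ijoin_left_unit_l e f r : mul e r = r -> mul e f = mul f e ->
  mul (ijoin mul e f) r = r.
Proof. by move=> er ef; rewrite /ijoin rmulBl rmulDl ef -rmulA er addrK. Qed.

Lemma ijoin_left_unit_r e f r : mul f r = r -> mul (ijoin mul e f) r = r.
Proof. by move=> fr; rewrite /ijoin rmulBl rmulDl -rmulA fr addrAC subrr add0r. Qed.

Lemma ijoin_right_unit_l e f r : mul r e = r -> mul r (ijoin mul e f) = r.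
Proof. by move=> re; rewrite /ijoin rmulBr rmulDr rmulA re addrK. Qed.

Lemma ijoin_right_unit_r e f r : mul r f = r -> mul e f = mul f e ->
  mul r (ijoin mul e f) = r.
Proof. by move=> rf ef; rewrite /ijoin rmulBr rmulDr ef rmulA rf addrAC subrr add0r. Qed.

Lemma vee_gen (P : S -> Prop) x : P x -> vee mul P x.
Proof. by exists x, [::]. Qed.

Lemma vee_ind (P Q : S -> Prop) : (forall x, P x -> Q x) ->
  (forall x y, Q x -> Q y -> Q (ijoin mul x y)) -> forall x, vee mul P x -> Q x.
Proof.
move=> PQ Qjoin x [e [s [Pe [Ps ->]]]]; elim: s Ps => /= [|z s IHs] Ps; first exact: PQ.
by apply: Qjoin; [apply: PQ; apply: Ps; left | apply: IHs => y Hy; apply: Ps; right].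
Qed.

Lemma vee_join P x y : vee mul P x -> vee mul P y -> vee mul P (ijoin mul x y).
Proof.
have foldr_ijoin e s z :
    ijoin mul (foldr (ijoin mul) e s) z = foldr (ijoin mul) (ijoin mul e z) s.
  by elim: s => //= w s IHs; rewrite ijoinA IHs.
move=> [e [s [Pe [Ps ->]]]] [e' [s' [Pe' [Ps' ->]]]].
exists e', (s ++ e :: s'); do 2?split=> //; last by rewrite foldr_cat foldr_ijoin.
by move=> z /(@List.in_app_or _ _ _ _) [/Ps | [<- | /Ps']].
Qed.

Lemma vee_mono (P Q : S -> Prop) x :
  (forall y, P y -> Q y) -> vee mul P x -> vee mul Q x.
Proof. by move=> PQ; apply: vee_ind => [y /PQ /vee_gen|]; last exact: vee_join. Qed.

Lemma vee_comm (P : S -> Prop) :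
  (forall e f, P e -> P f -> mul e f = mul f e) ->
  forall x y, vee mul P x -> vee mul P y -> mul x y = mul y x.
Proof.
have comm_vee x : (forall e, P e -> mul x e = mul e x) ->
    forall y, vee mul P y -> mul x y = mul y x.
  by move=> Px; apply: vee_ind => // y z yx zx; rewrite (commute_ijoin yx zx).
move=> Pcomm x y Px; apply: (comm_vee) => e Pe; apply: esym; move: x Px.
by apply: comm_vee => f Pf; apply: Pcomm.
Qed.

Lemma vee_idem (P : S -> Prop) :
  (forall e, P e -> idem mul e) -> (forall e f, P e -> P f -> mul e f = mul f e) ->
  forall x, vee mul P x -> idem mul x.
Proof.
move=> Pidem Pcomm x Px; have [] : vee mul P x /\ idem mul x; last by [].
move: x Px; apply: vee_ind => [x Px|x y [Vx ix] [Vy iy]].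
  by split; [apply: vee_gen | apply: Pidem].
split; first exact: vee_join.
by apply: idem_ijoin => //; apply: vee_comm Vx Vy.
Qed.

Lemma idle_refl a : idem mul a -> idle mul a a.
Proof. by rewrite /idem /idle => ->. Qed.

Lemma idle_trans a b c : idle mul a b -> idle mul b c -> idle mul a c.
Proof.
move=> [ab ba] [bc cb]; split; first by rewrite {1}ab {1}bc rmulA -ab.
by rewrite {1}ba {1}cb -rmulA -ba.
Qed.

Lemma idle_antisym a b : idle mul a b -> idle mul b a -> a = b.
Proof. by move=> [ab _] [_ ab']; rewrite {1}ab -ab'. Qed.

Definition left_unit_in (E : S -> Prop) x := exists e, E e /\ mul e x = x.
Definition right_unit_in (E : S -> Prop) x := exists e, E e /\ mul x e = x.

Section OneSidedUnits.
Variable E : S -> Prop.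
Hypotheses (E_comm : forall e f, E e -> E f -> mul e f = mul f e)
  (E_join : forall e f, E e -> E f -> E (ijoin mul e f)) (E_nonempty : exists e, E e).

Lemma left_unit_in_sum (T : Type) (l : seq T) (F : T -> S) :
  (forall p, List.In p l -> left_unit_in E (F p)) ->
  left_unit_in E (\sum_(p <- l) F p).
Proof.
apply: sum_In_ind; first by have [e Ee] := E_nonempty; exists e; rewrite rmul0r.
move=> x y [e [Ee ex]] [f [Ef fy]]; exists (ijoin mul e f); split; first exact: E_join.
by rewrite rmulDr (ijoin_left_unit_l ex (E_comm Ee Ef)) (ijoin_left_unit_r _ fy).
Qed.

Lemma right_unit_in_sum (T : Type) (l : seq T) (F : T -> S) :
  (forall p, List.In p l -> right_unit_in E (F p)) ->
  right_unit_in E (\sum_(p <- l) F p).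
Proof.
apply: sum_In_ind; first by have [e Ee] := E_nonempty; exists e; rewrite rmul0l.
move=> x y [e [Ee xe]] [f [Ef yf]]; exists (ijoin mul e f); split; first exact: E_join.
by rewrite rmulDl (ijoin_right_unit_l _ xe) (ijoin_right_unit_r yf (E_comm Ee Ef)).
Qed.

Lemma left_unit_in_prodset (A B : S -> Prop) x :
  (forall a, A a -> left_unit_in E a) -> prodset mul A B x -> left_unit_in E x.
Proof.
move=> A_unit [l [Hl ->]]; apply: left_unit_in_sum => p /Hl [/A_unit [e [Ee ep]] _].
by exists e; rewrite rmulA ep.
Qed.

Lemma right_unit_in_prodset (A B : S -> Prop) x :
  (forall b, B b -> right_unit_in E b) -> prodset mul A B x -> right_unit_in E x.
Proof.
move=> B_unit [l [Hl ->]]; apply: right_unit_in_sum => p /Hl [_ /B_unit [e [Ee pe]]].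
by exists e; rewrite -rmulA pe.
Qed.

Lemma two_sided_unit x : left_unit_in E x -> right_unit_in E x ->
  exists e, E e /\ mul e x = x /\ mul x e = x.
Proof.
move=> [e [Ee ex]] [f [Ef xf]]; exists (ijoin mul e f); split; first exact: E_join.
by rewrite (ijoin_left_unit_l ex (E_comm Ee Ef)) (ijoin_right_unit_r xf (E_comm Ee Ef)).
Qed.

End OneSidedUnits.

Lemma idle_seq_le (s : nat -> S) :
  (forall n, idem mul (s n)) -> (forall n, idle mul (s n) (s n.+1)) ->
  forall i j, (i <= j)%N -> idle mul (s i) (s j).
Proof.
move=> s_idem s_step i j /subnKC <-; elim: (j - i)%N => [|k IHk].
  by rewrite addn0; apply: idle_refl.
by rewrite addnS; apply: idle_trans IHk (s_step _).
Qed.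

Lemma strict_idle_seq_infinite_chain (A : S -> Prop) (s : nat -> S) :
  (forall x, A x -> idem mul x) -> (forall n, A (s n)) ->
  (forall n, idle mul (s n) (s n.+1) /\ s n.+1 <> s n) ->
  ~ (forall Ch, is_chain mul A Ch -> finite_set Ch).
Proof.
move=> A_idem As s_step A_chain.
have s_le := idle_seq_le (fun n => A_idem _ (As n)) (fun n => (s_step n).1).
have s_inj : injective s.
  suff lt_neq i j : (i < j)%N -> s i <> s j.
    move=> i j sij; apply/eqP.
    by case: ltngtP => // [/lt_neq/(_ sij) | /lt_neq/(_ (esym sij))].
  move=> ij sij; apply: (s_step i).2; apply: idle_antisym (s_step i).1.
  by rewrite sij; apply: s_le.
apply: infinite_range_inj s_inj (A_chain _ _); split; first by move=> _ [n ->].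
move=> _ _ [i ->] [j ->]; case: (leqP i j) => [ij | /ltnW ji].
  by left; apply: s_le.
by right; apply: s_le.
Qed.

Lemma exists_maximal_above (A : S -> Prop) :
  (forall x, A x -> idem mul x) -> (forall Ch, is_chain mul A Ch -> finite_set Ch) ->
  forall a, A a -> exists m, maximal_in mul A m /\ idle mul a m.
Proof.
move=> A_idem A_chain a Aa; apply: NNPP => no_max.
pose above b := A b /\ idle mul a b.
have larger b : above b -> exists c, above c /\ idle mul b c /\ c <> b.
  move=> [Ab ab]; apply: NNPP => no_larger; apply: no_max; exists b.
  split=> //; split=> // c Ac bc; apply: NNPP => cb; apply: no_larger.
  by exists c; split; [split=> //; apply: idle_trans ab bc | split].
pose next b := epsilon (inhabits 0) (fun c => above c /\ idle mul b c /\ c <> b).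
have next_spec b : above b -> above (next b) /\ idle mul b (next b) /\ next b <> b.
  by move=> /larger; apply: epsilon_spec.
pose s n := iter n next a.
have above_s n : above (s n).
  elim: n => [|n IHn]; first by split=> //; apply/idle_refl/A_idem.
  exact: (next_spec _ IHn).1.
apply: (strict_idle_seq_infinite_chain A_idem _ _ A_chain) => [n | n].
  exact: (above_s n).1.
exact: (next_spec _ (above_s n)).2.
Qed.

Lemma maximal_enough_idem (R A : S -> Prop) :
  local_units mul R A ->
  (forall e f, maximal_in mul A e -> maximal_in mul A f -> e <> f ->
     mul e f = 0 /\ mul f e = 0) ->
  (forall Ch, is_chain mul A Ch -> finite_set Ch) ->
  enough_idem_set mul R (maximal_in mul A).
Proof.
move=> [A_sub [A_comm [A_join A_unit]]] max_orth A_chain.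
have A_idem x : A x -> idem mul x by move=> /A_sub [].
have vee_max_A : forall x, vee mul (maximal_in mul A) x -> A x.
  by apply: vee_ind => [x []|].
split; first by move=> e [/A_sub].
split; first by move=> e f [Ae _] [Af _]; apply: A_comm.
split=> //; split; first by move=> e /vee_max_A /A_sub.
split; first by move=> e f /vee_max_A Ae /vee_max_A; apply: A_comm.
split; first by move=> e f; apply: vee_join.
move=> r /A_unit [a [Aa [ar ra]]].
have [m [max_m [am ma]]] := exists_maximal_above A_idem A_chain Aa.
exists m; split; first exact: vee_gen.
by split; [rewrite -ar rmulA -ma | rewrite -ra -rmulA -am].
Qed.

End Rng.

Section Group.
Variable G : Grp.

Lemma gmul1g (x : G) : gmul (gone G) x = x. Proof. exact: (gmul1 x).1. Qed.
Lemma gmulVg (x : G) : gmul (ginv x) x = gone G. Proof. exact: (gmulV x).1. Qed.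
Lemma gmulgV (x : G) : gmul x (ginv x) = gone G. Proof. exact: (gmulV x).2. Qed.
Lemma gmulKg (x y : G) : gmul (ginv x) (gmul x y) = y.
Proof. by rewrite gmulA gmulVg gmul1g. Qed.
Lemma gmulVKg (x y : G) : gmul x (gmul (ginv x) y) = y.
Proof. by rewrite gmulA gmulgV gmul1g. Qed.
Lemma ginvK (x : G) : ginv (ginv x) = x.
Proof. by rewrite -[RHS](gmulKg (ginv x)) gmulVg (gmul1 _).2. Qed.
Lemma ginvM (x y : G) : ginv (gmul x y) = gmul (ginv y) (ginv x).
Proof.
have E : gmul (gmul x y) (gmul (ginv y) (ginv x)) = gone G.
  by rewrite -gmulA gmulVKg gmulgV.
by rewrite -[RHS](gmulKg (gmul x y)) E (gmul1 _).2.
Qed.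

Variable N : G -> Prop.
Hypothesis N_normal : normal_subgroup N.

Lemma coset_refl g : coset N g g.
Proof. by rewrite /coset gmulVg; case: N_normal. Qed.

Lemma coset_inv g h : coset N g h -> coset N (ginv g) (ginv h).
Proof.
have [_ [_ [NV NJ]]] := N_normal.
rewrite /coset ginvK => /NV; rewrite ginvM ginvK => /(NJ (ginv g)).
by rewrite ginvK -!gmulA gmulgV (gmul1 _).2.
Qed.

Lemma coset_mul g g' h h' :
  coset N g h -> coset N g' h' -> coset N (gmul g g') (gmul h h').
Proof.
have [_ [NM [_ NJ]]] := N_normal.
rewrite /coset => Nh Nh'; rewrite ginvM.
have -> : gmul (gmul (ginv g') (ginv g)) (gmul h h') =
    gmul (gmul (gmul (ginv g') (gmul (ginv g) h)) g') (gmul (ginv g') h').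
  by rewrite -!gmulA gmulVKg.
by apply: NM => //; apply: NJ.
Qed.

End Group.

Section HomogeneousUnits.
Variables (G : Grp) (S : zmodType) (mul : S -> S -> S)
  (Sg : G -> S -> Prop) (M : G -> S -> Prop).
Hypotheses (mul_rng : is_rng mul)
  (Sg_triple : forall h, seteq (prodset mul (prodset mul (Sg h) (Sg (ginv h))) (Sg h)) (Sg h))
  (M_idem : forall h, enough_idem_set mul (prodset mul (Sg h) (Sg (ginv h))) (M h)).

Lemma homogeneous_left_unit h x : Sg h x -> left_unit_in mul (vee mul (M h)) x.
Proof.
have [_ [_ [_ [_ [V_comm [V_join V_unit]]]]]] := M_idem h.
have [e [Ve _]] := V_unit 0 (prodset0 _ _ _).
move=> /(Sg_triple h x).2; apply: (left_unit_in_prodset mul_rng V_comm V_join).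
  by exists e.
by move=> q /V_unit [f [Vf [fq _]]]; exists f.
Qed.

Lemma homogeneous_right_unit h y :
  Sg h y -> right_unit_in mul (vee mul (M (ginv h))) y.
Proof.
have [_ [_ [_ [_ [V_comm [V_join V_unit]]]]]] := M_idem (ginv h).
rewrite ginvK in V_unit; have [e [Ve _]] := V_unit 0 (prodset0 _ _ _).
move=> /(Sg_triple h y).2 /(prodset_sumA mul_rng).
apply: (right_unit_in_prodset mul_rng V_comm V_join); first by exists e.
by move=> q /V_unit [f [Vf [_ qf]]]; exists f.
Qed.

End HomogeneousUnits.

Section InducedGrading.
Variables (G : Grp) (N : G -> Prop) (S : zmodType) (mul : S -> S -> S)
  (Sg : G -> S -> Prop) (M : G -> S -> Prop).
Hypotheses (mul_rng : is_rng mul) (N_normal : normal_subgroup N)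
  (Sg_grading : is_grading mul Sg)
  (Sg_triple : forall h, seteq (prodset mul (prodset mul (Sg h) (Sg (ginv h))) (Sg h)) (Sg h))
  (M_idem : forall h, enough_idem_set mul (prodset mul (Sg h) (Sg (ginv h))) (M h))
  (M_comm : forall g h k e f, coset N g h -> coset N g k -> M h e -> M k f ->
     mul e f = mul f e).

Local Notation SC := (induced_comp N Sg).

Lemma SgN h x : Sg h x -> Sg h (- x).
Proof.
have [Sg0 [SgB _]] := Sg_grading.
by move=> Sx; rewrite -sub0r; apply: SgB (Sg0 h) Sx.
Qed.

Lemma SgM h k x y : Sg h x -> Sg k y -> Sg (gmul h k) (mul x y).
Proof. by have [_ [_ [SgM _]]] := Sg_grading; apply: SgM. Qed.

Lemma induced_comp0 g : SC g 0.
Proof. by exists [::]; rewrite big_nil. Qed.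

Lemma induced_compD g x y : SC g x -> SC g y -> SC g (x + y).
Proof.
move=> [l1 [H1 ->]] [l2 [H2 ->]]; exists (l1 ++ l2); split; last by rewrite big_cat.
by move=> p /(@List.in_app_or _ _ _ _) [] ?; [exact: H1 | exact: H2].
Qed.

Lemma induced_compN g x : SC g x -> SC g (- x).
Proof.
move=> [l [Hl ->]]; exists [seq (p.1, - p.2) | p <- l]; split; last first.
  by rewrite big_map -sumrN.
by move=> _ /(List.in_map_iff _ _ _) [q [<- /Hl [cq Sq]]]; split=> //; apply: SgN.
Qed.

Lemma induced_comp_sum g (T : Type) (l : seq T) (F : T -> S) :
  (forall p, List.In p l -> SC g (F p)) -> SC g (\sum_(p <- l) F p).
Proof. exact: sum_In_ind (@induced_comp0 g) (@induced_compD g). Qed.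

Lemma induced_comp_hom g h x : coset N g h -> Sg h x -> SC g x.
Proof.
move=> gh Sx; exists [:: (h, x)]; split; last by rewrite big_seq1.
by move=> p [<- | []].
Qed.

Variable g : G.

Local Notation R := (prodset mul (SC g) (SC (ginv g))).
Local Notation A := (A_C N mul M g).

Lemma induced_comp_triple a b c :
  SC g a -> SC (ginv g) b -> SC g c -> SC g (mul (mul a b) c).
Proof.
move=> [la [Hla ->]] [lb [Hlb ->]] [lc [Hlc ->]].
rewrite !rmul_suml //; apply: induced_comp_sum => pa /Hla [ca Sa].
rewrite [mul pa.2 _]rmul_sumr // rmul_suml //; apply: induced_comp_sum => pb /Hlb [cb Sb].
rewrite rmul_sumr //; apply: induced_comp_sum => pc /Hlc [cc Sc].
have cabc := coset_mul N_normal (coset_mul N_normal ca cb) cc.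
rewrite gmulgV gmul1g in cabc.
by apply: induced_comp_hom cabc _; apply: SgM => //; apply: SgM.
Qed.

Lemma induced_comp_triple_eq : seteq (prodset mul R (SC g)) (SC g).
Proof.
move=> x; split.
  move=> [l [Hl ->]]; apply: induced_comp_sum => p /Hl [[l' [Hl' ->]] Sp2].
  rewrite rmul_suml //; apply: induced_comp_sum => q /Hl' [Sq1 Sq2].
  exact: induced_comp_triple.
move=> [l [Hl ->]]; apply: prodset_sum => p /Hl [gp /(Sg_triple p.1 p.2).2].
apply: prodsetS => [y|b]; last exact: induced_comp_hom gp.
apply: prodsetS => [a|b]; first exact: induced_comp_hom gp.
exact: induced_comp_hom (coset_inv N_normal gp).
Qed.

Lemma prodset_induced_mul x y : R x -> R y -> R (mul x y).
Proof.
move=> [l [Hl ->]] [l' [Hl' ->]]; rewrite rmul_sumr //.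
apply: prodset_sum => q /Hl' [Sq1 Sq2]; rewrite rmulA // rmul_suml //.
apply: prodset_mul => //; apply: induced_comp_sum => p /Hl [Sp1 Sp2].
exact: induced_comp_triple.
Qed.

Lemma prodset_induced_ijoin x y : R x -> R y -> R (ijoin mul x y).
Proof.
move=> Rx Ry; apply: prodsetD; first exact: prodsetD.
by apply: prodsetN => //; [exact: induced_compN | exact: prodset_induced_mul].
Qed.

Lemma vee_M_sub_A_C h e : coset N g h -> vee mul (M h) e -> A e.
Proof. by move=> gh; apply: (vee_mono mul_rng) => f Mf; exists h. Qed.

Lemma A_C_comm x y : A x -> A y -> mul x y = mul y x.
Proof. by apply: vee_comm => // e f [h [gh Me]] [k [gk Mf]]; apply: M_comm gh gk Me Mf. Qed.

Lemma A_C_nonempty : exists e, A e.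
Proof.
have [_ [_ [_ [_ [_ [_ V_unit]]]]]] := M_idem g.
have [e [Ve _]] := V_unit 0 (prodset0 _ _ _).
by exists e; apply: vee_M_sub_A_C (coset_refl N_normal g) Ve.
Qed.

Lemma A_C_sub x : A x -> R x /\ idem mul x.
Proof.
have gen_R e : (exists h, coset N g h /\ M h e) -> R e /\ idem mul e.
  move=> [h [gh /(M_idem h).1 [Re ee]]]; split=> //; move: Re.
  apply: prodsetS => y; first exact: induced_comp_hom.
  exact: induced_comp_hom (coset_inv N_normal gh).
move=> Ax; split; last first.
  apply: (vee_idem mul_rng _ _ Ax) => [e /gen_R [] // | e f Ge Gf].
  by apply: A_C_comm; apply: vee_gen.
by move: x Ax; apply: vee_ind => [e /gen_R [] | ] //; apply: prodset_induced_ijoin.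
Qed.

Lemma A_C_local_units : local_units mul R A.
Proof.
have A_join : forall x y, A x -> A y -> A (ijoin mul x y) := @vee_join _ _ mul_rng _.
split; first exact: A_C_sub.
split; first exact: A_C_comm.
split; first exact: A_join.
have left_unit x : SC g x -> left_unit_in mul A x.
  move=> [l [Hl ->]]; apply: (left_unit_in_sum mul_rng A_C_comm A_join A_C_nonempty).
  move=> p /Hl [gp /(homogeneous_left_unit mul_rng Sg_triple M_idem) [e [Ve ep]]].
  by exists e; split=> //; apply: vee_M_sub_A_C gp Ve.
have right_unit y : SC (ginv g) y -> right_unit_in mul A y.
  move=> [l [Hl ->]]; apply: (right_unit_in_sum mul_rng A_C_comm A_join A_C_nonempty).
  move=> p /Hl [gp /(homogeneous_right_unit mul_rng Sg_triple M_idem) [e [Ve pe]]].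
  have gp' := coset_inv N_normal gp; rewrite ginvK in gp'.
  by exists e; split=> //; apply: vee_M_sub_A_C gp' Ve.
move=> r Rr; apply: (two_sided_unit mul_rng A_C_comm A_join).
  exact: (left_unit_in_prodset mul_rng A_C_comm A_join A_C_nonempty left_unit Rr).
exact: (right_unit_in_prodset mul_rng A_C_comm A_join A_C_nonempty right_unit Rr).
Qed.

End InducedGrading.

Theorem proposition5p13 (G : Grp) (N : G -> Prop) (S : zmodType)
    (mul : S -> S -> S) (Sg : G -> S -> Prop) (M : G -> S -> Prop) :
  is_rng mul ->
  normal_subgroup N ->
  is_grading mul Sg ->
  (* S is virtually epsilon-strongly graded, witnessed by the sets M_g *)
  (forall g, seteq (prodset mul (prodset mul (Sg g) (Sg (ginv g))) (Sg g)) (Sg g)) ->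
  (forall g, enough_idem_set mul (prodset mul (Sg g) (Sg (ginv g))) (M g)) ->
  (* (a) *)
  (forall g h k e f, coset N g h -> coset N g k -> M h e -> M k f ->
     mul e f = mul f e) ->
  (* (b) *)
  (forall g e, maximal_in mul (A_C N mul M g) e -> idem mul e) ->
  (forall g e f, maximal_in mul (A_C N mul M g) e ->
     maximal_in mul (A_C N mul M g) f -> e <> f ->
     mul e f = 0 /\ mul f e = 0) ->
  (* (c) *)
  (forall g Ch, is_chain mul (A_C N mul M g) Ch -> finite_set Ch) ->
  (* conclusion: the induced G/N-grading is virtually epsilon-strong *)
  forall g, veps_component mul (induced_comp N Sg g) (induced_comp N Sg (ginv g)).
Proof.
(* Maximal elements of A_C lie in A_C, hence are idempotent anyway. *)
move=> mul_rng N_normal Sg_grading Sg_triple M_idem M_comm _ max_orth A_chain g.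
split; first exact: induced_comp_triple_eq.
exists (maximal_in mul (A_C N mul M g)).
apply: maximal_enough_idem (max_orth g) (A_chain g) => //.
exact: A_C_local_units.
Qed.
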